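(* Let $\mathbb{G}$ be a $b$-bounded concurrent game system and $\pi$ a strategy profile given by probabilistic transducers. If $\pi$ is not a subgame perfect equilibrium in $\mathbb{G}$, then there exist an agent $i$, a state $v^*=\langle v,s,n\rangle$ of $\mathbb{G}\times\pi$ with $i\in P(v)$, and an action $a\in A_i$ such that (1) $v^*\in R$ (the set of relevant history-reachable states for agent $i$), and (2) in the Markov chain $\mathbb{G}\times\pi'$ obtained from $\mathbb{G}\times\pi$ by changing only the outgoing transition probabilities of $v^*$, namely by replacing the distribution $O_i(s^i,v)$ of agent $i$ with the point mass on $a$ (all other agents' outputs unchanged), the probability of reaching $T=\{\langle v',s',n'\rangle : v'\in G_i\}$ from $v^*$ is strictly larger than in $\mathbb{G}\times\pi$.
   Context: Fix a constant $b\ge 1$. A $b$-bounded concurrent game system is a tuple $\mathbb{G}=\langle V,v_0,\Omega,A,P,\delta,\mathbb{L},G,F\rangle$ where: $V$ is a finite set of states with initial state $v_0$; $\Omega=\{1,\dots,k\}$ is the set of agents; $A_i$ is the finite action set of agent $i$, $\Theta_W=\prod_{i\in W}A_i$; $P:V\to 2^\Omega$ with $|P(v)|\le b$; $\delta(v,\theta,v')\in[0,1]$ for $\theta\in\Theta_{P(v)}$ with $\sum_{v'}\delta(v,\theta,v')=1$, all probabilities binary fractions of exactly $\mathbb{L}$ bits; $G_i\subseteq V$ is agent $i$'s reachability goal; $F\in\mathbb{N}$ is a horizon. A play starts at $v_0$; at each state $v$ the agents in $P(v)$ choose actions from their current distributions, and the next state is sampled from $\delta$; the play visits $F$ states in total.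 Agent $i$'s payoff from a play is $1$ if it visits $G_i$ and $0$ otherwise; $p(\pi,i)$ is the expected payoff under profile $\pi$. A strategy of agent $i$ is any function $V^+\to\mathbb{D}(A_i)$; input strategies are given by probabilistic transducers $\langle S_i,s_0^i,V,\gamma^i,O_i\rangle$ (finite $S_i$, deterministic $\gamma^i:S_i\times V\to S_i$, $O_i:S_i\times V\to\mathbb{D}(A_i)$). The product transducer of $\pi$ has states $S=\prod_iS_i$, initial state $s_0$, componentwise transitions $\gamma$, and output $O(s,v)$ = product distribution of $O_j(s^j,v)$, $j\in P(v)$. A Nash equilibrium is a profile $\pi$ such that for every agent $i$ and every strategy $\pi'_i$, replacing $\pi_i$ by $\pi'_i$ does not increase $p(\cdot,i)$. A history is $h\in V^+$ starting at $v_0$, with $|h|\le F$, such that consecutive states $h[j],h[j+1]$ satisfy $\delta(h[j],\theta,h[j+1])>0$ for some $\theta$. The substrategy is $\pi_i|_h(w)=\pi_i(h\cdot w)$; the subgame $\mathbb{G}|_h$ starts at the last state of $h$ with horizon $F-|h|$, and agents whose goal was visited in $h$ get payoff $1$. $\pi$ is a subgame perfect equilibrium iff for every history $h$, $\pi|_h=\langle\pi_1|_h,\dots,\pi_k|_h\rangle$ is a Nash equilibrium in $\mathbb{G}|_h$. The Markov chain $\mathbb{G}\times\pi$ has states $V\times S\times[F]$ and transition probability from $\langle v_1,s_1,n_1\rangle$ to $\langle v_2,s_2,n_2\rangle$ equal to $p_vp_sp_n$, where $p_s=[s_2=\gamma(s_1,v_1)]$, $p_n=[n_2=n_1+1]$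 (no outgoing transitions when $n_1=F$), and $p_v=\sum_\theta\Pr[O(s_1,v_1)=\theta]\,\delta(v_1,\theta,v_2)$. A state $r$ is in $R$ (for agent $i$) iff there is a path $\langle v_0,s_0,1\rangle=x_1,\dots,x_m=r$, $x_j=\langle v'_j,s'_j,n_j\rangle$, with $\gamma(s'_j,v'_j)=s'_{j+1}$, $n_{j+1}=n_j+1$, $\delta(v'_j,\theta,v'_{j+1})>0$ for some $\theta\in\Theta_{P(v'_j)}$, and $v'_j\notin G_i$ for all $j$. *)

From HB Require Import structures.
From mathcomp Require Import all_boot all_order all_algebra.
From mathcomp Require Import reals.

Set Implicit Arguments.
Unset Strict Implicit.
Unset Printing Implicit Defensive.

Import Order.TTheory GRing.Theory Num.Theory.
Local Open Scope ring_scope.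

(* Agents are 'I_k (agent j+1 of the paper is j here).
   Joint actions are full profiles (one action per agent); delta is required
   (in bounded_cgs) to depend only on the components of agents in P(v). *)
Record cgs (R : realType) := CGS {
  cg_k : nat;
  cg_V : finType;
  cg_v0 : cg_V;
  cg_A : 'I_cg_k -> finType;
  cg_P : cg_V -> {set 'I_cg_k};
  cg_delta : cg_V -> {dffun forall j : 'I_cg_k, cg_A j} -> cg_V -> R;
  cg_L : nat;
  cg_G : 'I_cg_k -> {set cg_V};
  cg_F : nat }.

Arguments cg_A {R} c j.
Arguments cg_delta {R} c _ _ _.
Arguments cg_P {R} c _.
Arguments cg_G {R} c _.

Section Defs.
Variable R : realType.

Definition is_dist (T : finType) (d : T -> R) :=
  (forall x, 0 <= d x) /\ \sum_x d x = 1.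

Variable G : cgs R.

Local Notation V := (cg_V G).
Local Notation k := (cg_k G).
Local Notation A := (cg_A G).
Local Notation v0 := (cg_v0 G).
Local Notation delta := (cg_delta G).
Local Notation F := (cg_F G).

Definition jact := {dffun forall j : 'I_k, A j}.

Definition bounded_cgs (b : nat) :=
  [/\ (forall v, #|cg_P G v| <= b)%N,
      (forall v th v', 0 <= delta v th v' <= 1),
      (forall v th, \sum_(v' : V) delta v th v' = 1),
      (forall v (th th' : jact), (forall j, j \in cg_P G v -> th j = th' j) ->
          forall v', delta v th v' = delta v th' v') &
      (forall v th v', exists m : nat, delta v th v' = m%:R / 2 ^+ cg_L G)].

Definition strategy (i : 'I_k) := seq V -> A i -> R.
Definition valid_strategy i (sg : strategy i) := forall h, is_dist (sg h).
Definition sprofile := forall i : 'I_k, strategy i.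

Definition jointw := seq V -> jact -> R.

Definition prof_w (pi : sprofile) : jointw :=
  fun h th => \prod_(j : 'I_k) pi j h (th j).

Definition dev_w (pi : sprofile) i (sg : strategy i) : jointw :=
  fun h th => \prod_(j : 'I_k) (if j == i then sg h (th i) else pi j h (th j)).

Definition stepP (w : jointw) (h : seq V) (v' : V) : R :=
  \sum_(th : jact) w h th * delta (last v0 h) th v'.

Definition reached (i : 'I_k) (h : seq V) := has (fun v => v \in cg_G G i) h.

(* expected payoff of agent i after history h (already visited),
   with n further states still to be visited *)
Fixpoint val (w : jointw) (i : 'I_k) (h : seq V) (n : nat) : R :=
  if reached i h then 1 else
  match n with
  | 0 => 0
  | n'.+1 => \sum_(v' : V) stepP w h v' * val w i (rcons h v') n'
  end.

Definition edge (x y : V) := [exists th : jact, 0 < delta x th y].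

Definition is_history (h : seq V) :=
  exists t, h = v0 :: t /\ (size h <= F)%N /\ path edge v0 t.

(* pi|_h is a Nash equilibrium of G|_h (the continuation of the game after h,
   with F - |h| states still to be visited, agents whose goal is in h get 1) *)
Definition NE_after (pi : sprofile) (h : seq V) :=
  forall i (sg : strategy i), valid_strategy sg ->
    val (dev_w pi sg) i h (F - size h) <= val (prof_w pi) i h (F - size h).

Definition SPE (pi : sprofile) := forall h, is_history h -> NE_after pi h.

Record transducer (i : 'I_k) := Tr {
  tS : finType;
  ts0 : tS;
  tgam : tS -> V -> tS;
  tO : tS -> V -> A i -> R }.

Arguments tS {i} t.
Arguments ts0 {i} t.
Arguments tgam {i} t _ _.
Arguments tO {i} t _ _ _.

Definition valid_transducer i (T : transducer i) :=
  forall s v, is_dist (tO T s v).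

Definition tprofile := forall i : 'I_k, transducer i.

(* strategy given by a transducer: on h = v1..vm, output O(s_m, v_m) where
   s_1 = s0 and s_{j+1} = gamma(s_j, v_j) *)
Definition trans_strat i (T : transducer i) : strategy i :=
  fun h a => let x := head v0 h in let t := behead h in
    tO T (foldl (tgam T) (ts0 T) (belast x t)) (last x t) a.

Variable pi : tprofile.

Definition PS := {dffun forall j : 'I_k, tS (pi j)}.
Definition s0P : PS := finfun (fun j => ts0 (pi j)).
Definition gamP (s : PS) (v : V) : PS := finfun (fun j => tgam (pi j) (s j) v).

Definition cstate := (V * PS * nat)%type.

(* transition probability p_v from x to next V-component v2
   (the S- and n-components are deterministic) *)
Definition chain_tr (x : cstate) (v2 : V) : R :=
  \sum_(th : jact) (\prod_(j : 'I_k) tO (pi j) (x.1.2 j) x.1.1 (th j))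
                   * delta x.1.1 th v2.

Definition mod_tr (i : 'I_k) (a : A i) (vstar : cstate) (x : cstate) (v2 : V) : R :=
  if x == vstar then
    \sum_(th : jact) (\prod_(j : 'I_k)
        (if j == i then (th i == a)%:R else tO (pi j) (x.1.2 j) x.1.1 (th j)))
      * delta x.1.1 th v2
  else chain_tr x v2.

Fixpoint reach (tr : cstate -> V -> R) (i : 'I_k) (fuel : nat) (x : cstate) : R :=
  if x.1.1 \in cg_G G i then 1 else
  match fuel with
  | 0 => 0
  | f.+1 => if (x.2 < F)%N then
              \sum_(v2 : V) tr x v2 * reach tr i f (v2, gamP x.1.2 x.1.1, x.2.+1)
            else 0
  end.

(* n strictly increases and is bounded by F, so fuel F suffices *)
Definition reachT (tr : cstate -> V -> R) (i : 'I_k) (x : cstate) : R :=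
  reach tr i F x.

Definition chain_edge (x y : cstate) :=
  [&& y.1.2 == gamP x.1.2 x.1.1, y.2 == x.2.+1 & edge x.1.1 y.1.1].

Definition inR (i : 'I_k) (r : cstate) :=
  let x1 : cstate := (v0, s0P, 1%N) in
  exists p : seq cstate,
    [/\ path chain_edge x1 p, last x1 p = r &
        all (fun x : cstate => x.1.1 \notin cg_G G i) (x1 :: p)].

End Defs.

Arguments mod_tr {R G} pi i a vstar x v2.
Arguments chain_tr {R G} pi x v2.
Arguments reachT {R G} pi tr i x.
Arguments inR {R G} pi i r.
Arguments PS {R G} pi.
Arguments SPE {R G} pi.
Arguments trans_strat {R G i} T h a.
Arguments valid_transducer {R G i} T.
Arguments bounded_cgs {R} G b.

From Pilot Require Import Defs.
From mathcomp Require Import all_boot all_order all_algebra perm.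
From mathcomp Require Import reals zify.
From Stdlib Require Import Classical.
Import Order.TTheory GRing.Theory Num.Theory.
Set Implicit Arguments.
Unset Strict Implicit.
Unset Printing Implicit Defensive.
Local Open Scope ring_scope.

(* Backward induction over the remaining horizon (the one-shot
   deviation principle) shows that then a single deviation at one step,
   followed by pi, already gains; and since that step plays a mixture of
   i's actions, some pure action a gains. The values of pi after histories
   avoiding G_i are reachability probabilities in G x pi from states of R,
   and the one-step deviation to a is exactly the modified chain. Where
   i is not in P(v), delta ignores i's action, so the modified chain
   coincides with G x pi there: the gaining state has i in P(v). *)

Section JointActions.
Variables (R : realType) (G : cgs R).
Local Notation k := (cg_k G).
Local Notation A := (cg_A G).
Local Notation J := (jact G).

Lemma prod_if_eq (i : 'I_k) (th : J) (f : forall j, A j -> R) (c : A i -> R) :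
  \prod_j (if j == i then c (th i) else f j (th j))
  = c (th i) * \prod_(j | j != i) f j (th j).
Proof.
rewrite (bigD1 i) //= eqxx; congr (_ * _); apply: eq_bigr => j /negbTE -> //.
Qed.

Lemma sum_mixed_joint (i : 'I_k) (c : A i -> R) (f : forall j, A j -> R) (d : J -> R) :
  \sum_(th : J) (\prod_j (if j == i then c (th i) else f j (th j))) * d th
  = \sum_a c a * \sum_(th : J)
      (\prod_j (if j == i then (th i == a)%:R else f j (th j))) * d th.
Proof.
under [RHS]eq_bigr do rewrite big_distrr.
rewrite exchange_big; apply: eq_bigr => th _ /=.
have c_point : \sum_a c a * (th i == a)%:R = c (th i).
  under eq_bigr do rewrite mulr_natr mulrb eq_sym.
  by rewrite -big_mkcond big_pred1_eq.
rewrite (prod_if_eq th f c) -c_point !big_distrl /=.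
by apply: eq_bigr => a _; rewrite (prod_if_eq th f (fun y => (y == a)%:R)) !mulrA.
Qed.

Definition jact_set (th : J) (i : 'I_k) (x : A i) : J :=
  [ffun j => dfwith (fun j => th j) x j].

Lemma jact_set_in th i (x : A i) : jact_set th x i = x.
Proof. by rewrite ffunE dfwith_in. Qed.

Lemma jact_set_out th i (x : A i) j : i != j -> jact_set th x j = th j.
Proof. by move=> ij; rewrite ffunE dfwith_out. Qed.

Definition jact_swap i (a b : A i) (th : J) : J := jact_set th (tperm a b (th i)).

Lemma jact_swapK i (a b : A i) : involutive (jact_swap a b).
Proof.
move=> th; apply/ffunP => j; rewrite /jact_swap.
case: (eqVneq i j) => [<-|ij]; first by rewrite !jact_set_in tpermK.
by rewrite [LHS]jact_set_out // jact_set_out.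
Qed.

Lemma sum_point_fiber i (a b : A i) (g : J -> R) :
  (forall th (x : A i), g (jact_set th x) = g th) ->
  \sum_(th : J) (th i == b)%:R * g th = \sum_(th : J) (th i == a)%:R * g th.
Proof.
move=> g_inv; rewrite (reindex_inj (can_inj (@jact_swapK i a b))) /=.
apply: eq_bigr => th _; rewrite /jact_swap jact_set_in g_inv.
by rewrite -[X in _ == X](tpermL a b) (inj_eq perm_inj).
Qed.

(* Swapping the actions a and b of agent i matches the two sums term by term,
   because delta only reads the actions of the agents in P(v). *)
Lemma sum_point_notin_P (b0 : nat) (i : 'I_k) (v : cg_V G) (f : forall j, A j -> R)
    (a b : A i) v' :
  bounded_cgs G b0 -> i \notin cg_P G v ->
  \sum_(th : J) (\prod_j (if j == i then (th i == b)%:R else f j (th j)))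
                  * cg_delta G v th v'
  = \sum_(th : J) (\prod_j (if j == i then (th i == a)%:R else f j (th j)))
                  * cg_delta G v th v'.
Proof.
move=> [_ _ _ delta_local _] iNP.
under eq_bigr do rewrite (@prod_if_eq i _ f (fun y => (y == b)%:R)) -mulrA.
under [RHS]eq_bigr do rewrite (@prod_if_eq i _ f (fun y => (y == a)%:R)) -mulrA.
apply: sum_point_fiber => th x; congr (_ * _).
  by apply: eq_bigr => j ji; rewrite jact_set_out // eq_sym.
apply: delta_local => j jP; apply: jact_set_out.
by apply: contraNneq iNP => ->.
Qed.

End JointActions.

Section ProductChain.
Variables (R : realType) (G : cgs R) (pi : tprofile G).
Local Notation k := (cg_k G).
Local Notation V := (cg_V G).
Local Notation A := (cg_A G).
Local Notation J := (jact G).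
Local Notation v0 := (cg_v0 G).
Local Notation F := (cg_F G).
Local Notation CS := (cstate pi).
Local Notation O j := (@tO R G j (pi j)).
Local Notation strat := (fun i => trans_strat (pi i)).
Local Notation value := Pilot.Defs.val.
Local Notation valP := (value (prof_w strat)).

Definition pure_tr i (a : A i) (x : CS) (v2 : V) :=
  \sum_(th : J) (\prod_(j : 'I_k)
        (if j == i then (th i == a)%:R else O j (x.1.2 j) x.1.1 (th j)))
      * cg_delta G x.1.1 th v2.

Lemma mod_tr_at i a (x : CS) v2 : mod_tr pi i a x x v2 = pure_tr a x v2.
Proof. by rewrite /mod_tr eqxx. Qed.

Lemma chain_tr_mixture i (x : CS) v2 :
  chain_tr pi x v2 = \sum_a O i (x.1.2 i) x.1.1 a * pure_tr a x v2.
Proof.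
rewrite /chain_tr /pure_tr -(@sum_mixed_joint _ _ i (O i (x.1.2 i) x.1.1)
  (fun j => O j (x.1.2 j) x.1.1) (fun th => cg_delta G x.1.1 th v2)).
apply: eq_bigr => th _; congr (_ * _).
by apply: eq_bigr => j _; case: eqP => // ->.
Qed.

Definition chain_state (t : seq V) : CS :=
  (last v0 t, foldl (@gamP R G pi) (s0P pi) (belast v0 t), (size t).+1).

Lemma chain_state_rcons t v :
  chain_state (rcons t v)
  = (v, gamP (chain_state t).1.2 (chain_state t).1.1, (chain_state t).2.+1).
Proof.
rewrite /chain_state last_rcons belast_rcons size_rcons /=.
by rewrite -foldl_rcons -lastI.
Qed.

Lemma trans_strat_chain_state j t a :
  trans_strat (pi j) (v0 :: t) a
  = O j ((chain_state t).1.2 j) (chain_state t).1.1 a.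
Proof.
have foldl_gamP l s : (foldl (@gamP R G pi) s l) j = foldl (@tgam R G j (pi j)) (s j) l.
  by elim: l s => //= x l IH s; rewrite IH ffunE.
by rewrite /trans_strat /= foldl_gamP ffunE.
Qed.

Lemma stepP_prof_w t v' :
  stepP (prof_w strat) (v0 :: t) v' = chain_tr pi (chain_state t) v'.
Proof.
rewrite /stepP /chain_tr; apply: eq_bigr => th _; congr (_ * _).
by apply: eq_bigr => j _; rewrite trans_strat_chain_state.
Qed.

Lemma stepP_dev_w i (sg : strategy i) t v' :
  stepP (dev_w strat sg) (v0 :: t) v'
  = \sum_a sg (v0 :: t) a * pure_tr a (chain_state t) v'.
Proof.
rewrite /stepP /pure_tr -(@sum_mixed_joint _ _ i (sg (v0 :: t))
  (fun j => O j ((chain_state t).1.2 j) (chain_state t).1.1)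
  (fun th => cg_delta G (chain_state t).1.1 th v')).
apply: eq_bigr => th _; congr (_ * _).
by apply: eq_bigr => j _; case: eqP => // _; rewrite trans_strat_chain_state.
Qed.

Lemma val_reached (w : jointw G) i h n : reached i h -> value w i h n = 1.
Proof. by case: n => [|n] /= ->. Qed.

Lemma val_unreached0 (w : jointw G) i h : ~~ reached i h -> value w i h 0 = 0.
Proof. by move=> /negbTE /= ->. Qed.

Lemma val_unreachedS (w : jointw G) i h n : ~~ reached i h ->
  value w i h n.+1 = \sum_v' stepP w h v' * value w i (rcons h v') n.
Proof. by move=> /negbTE /= ->. Qed.

Lemma reach_goal tr i f (x : CS) : x.1.1 \in cg_G G i -> reach tr i f x = 1.
Proof. by case: f => [|f] /= ->. Qed.

Lemma reach_horizon tr i f (x : CS) : x.1.1 \notin cg_G G i -> (F <= x.2)%N ->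
  reach tr i f x = 0.
Proof. by case: f => [|f] /= /negbTE -> //; rewrite leqNgt => /negbTE ->. Qed.

Lemma reach_step tr i f (x : CS) : x.1.1 \notin cg_G G i -> (x.2 < F)%N ->
  reach tr i f.+1 x = \sum_v2 tr x v2 * reach tr i f (v2, gamP x.1.2 x.1.1, x.2.+1).
Proof. by move=> /= /negbTE -> ->. Qed.

Lemma reached_rcons i t v :
  reached i (v0 :: rcons t v) = (v \in cg_G G i) || reached i (v0 :: t).
Proof. by rewrite -rcons_cons /reached has_rcons. Qed.

Lemma reached_cons_belast i t :
  reached i (v0 :: t) = (last v0 t \in cg_G G i) || reached i (belast v0 t).
Proof. by rewrite [v0 :: t]lastI /reached has_rcons. Qed.

Lemma last_notin_goal i t : ~~ reached i (v0 :: t) -> last v0 t \notin cg_G G i.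
Proof. by rewrite reached_cons_belast negb_or => /andP[]. Qed.

Lemma val_prof_reach i n t f : ~~ reached i (belast v0 t) ->
  ((size t).+1 + n = F)%N -> (n <= f)%N ->
  valP i (v0 :: t) n = reach (chain_tr pi) i f (chain_state t).
Proof.
elim: n t f => [|n IH] t f nr hsize hf;
  (have [lastG|lastNG] := boolP (last v0 t \in cg_G G i);
    first by rewrite val_reached ?reach_goal // reached_cons_belast lastG);
  have nr' : ~~ reached i (v0 :: t) by rewrite reached_cons_belast negb_or lastNG.
  by rewrite val_unreached0 // reach_horizon //=; lia.
case: f hf => [//|f] hf.
rewrite val_unreachedS // reach_step //=; last by lia.
apply: eq_bigr => v' _; rewrite stepP_prof_w -chain_state_rcons; congr (_ * _).
by apply: IH; rewrite ?belast_rcons ?size_rcons //; lia.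
Qed.

Lemma reach_mod_later i a (vs x : CS) f : (vs.2 < x.2)%N ->
  reach (mod_tr pi i a vs) i f x = reach (chain_tr pi) i f x.
Proof.
elim: f x => [|f IH] x later //=.
case: ifP => // _; case: ifP => // _.
apply: eq_bigr => v2 _; rewrite IH /=; last by lia.
by rewrite /mod_tr ifF //; apply: contraTF later => /eqP ->; rewrite ltnn.
Qed.

Lemma reachT_mod_chain_state i a t n : ~~ reached i (v0 :: t) ->
  ((size t).+1 + n.+1 = F)%N ->
  reachT pi (mod_tr pi i a (chain_state t)) i (chain_state t)
  = \sum_v' pure_tr a (chain_state t) v' * valP i (rcons (v0 :: t) v') n.
Proof.
move=> nr hsize; rewrite /reachT -(prednK (_ : (0 < F)%N)); last by lia.
rewrite reach_step ?last_notin_goal //=; last by lia.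
apply: eq_bigr => v' _; rewrite mod_tr_at reach_mod_later /=; last by lia.
congr (_ * _); rewrite -chain_state_rcons; symmetry.
by apply: val_prof_reach; rewrite ?belast_rcons ?size_rcons //; lia.
Qed.

Lemma inR_chain_state i t : path (@edge R G) v0 t -> ~~ reached i (v0 :: t) ->
  inR pi i (chain_state t).
Proof.
elim/last_ind: t => [|t v IH] hpath nr.
  by exists [::]; split => //=; rewrite andbT; move: nr; rewrite /reached /= orbF.
move: hpath nr; rewrite rcons_path reached_rcons negb_or => /andP[hpath hedge] /andP[vNG nr].
have [p [ppath plast pall]] := IH hpath nr.
exists (rcons p (chain_state (rcons t v))); split.
- by rewrite rcons_path ppath plast /= /chain_edge chain_state_rcons /= !eqxx.
- by rewrite last_rcons.
- by rewrite -rcons_cons all_rcons pall andbT /chain_state last_rcons.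
Qed.

Variable b : nat.
Hypothesis bounded : bounded_cgs G b.
Hypothesis valid : forall j, valid_transducer (pi j).

Lemma pure_tr_notin_P i (a : A i) t v' : i \notin cg_P G (last v0 t) ->
  pure_tr a (chain_state t) v' = chain_tr pi (chain_state t) v'.
Proof.
move=> iNP; rewrite (chain_tr_mixture i).
under eq_bigr => a' _ do rewrite /pure_tr (@sum_point_notin_P _ _ b i _
  (fun j => O j ((chain_state t).1.2 j) (chain_state t).1.1) a a' v' bounded iNP).
by rewrite -big_distrl /= (proj2 (valid _ _)) mul1r.
Qed.

Lemma stepP_dev_w_ge0 i (sg : strategy i) t v' : valid_strategy sg ->
  0 <= stepP (dev_w strat sg) (v0 :: t) v'.
Proof.
have [_ delta01 _ _ _] := bounded.
move=> sg_valid; apply: sumr_ge0 => th _; apply: mulr_ge0.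
  apply: prodr_ge0 => j _; case: ifP => _; first exact: (proj1 (sg_valid _)).
  by rewrite trans_strat_chain_state; exact: (proj1 (valid _ _)).
by case/andP: (delta01 (last v0 (v0 :: t)) th v').
Qed.

Lemma stepP_non_edge (w : jointw G) t v' : ~~ edge (last v0 t) v' ->
  stepP w (v0 :: t) v' = 0.
Proof.
have [_ delta01 _ _ _] := bounded.
move=> /existsPn noedge; apply: big1 => th _.
have := noedge th; case/andP: (delta01 (last v0 t) th v') => delta_ge0 _.
by rewrite lt_neqAle delta_ge0 andbT negbK => /eqP <-; rewrite mulr0.
Qed.

Lemma one_shot_deviation i (sg : strategy i) : valid_strategy sg ->
  (forall t (a : A i) n, path (@edge R G) v0 t -> ~~ reached i (v0 :: t) ->
     ((size t).+1 + n.+1 = F)%N ->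
     \sum_v' pure_tr a (chain_state t) v' * valP i (rcons (v0 :: t) v') n
       <= valP i (v0 :: t) n.+1) ->
  forall n t, path (@edge R G) v0 t -> ((size t).+1 + n = F)%N ->
    value (dev_w strat sg) i (v0 :: t) n <= valP i (v0 :: t) n.
Proof.
move=> sg_valid pure_le; elim=> [|n IH] t hpath hsize;
  (have [nr|nr] := boolP (reached i (v0 :: t)); first by rewrite !val_reached).
  by rewrite !val_unreached0.
rewrite val_unreachedS //.
apply: (@le_trans _ _ (\sum_v' stepP (dev_w strat sg) (v0 :: t) v' *
                        valP i (rcons (v0 :: t) v') n)).
  apply: ler_sum => v' _.
  have [hedge|noedge] := boolP (edge (last v0 t) v'); last first.
    by rewrite stepP_non_edge // !mul0r.
  apply: ler_wpM2l; first exact: stepP_dev_w_ge0.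
  apply: (IH (rcons t v')); first by rewrite rcons_path hpath hedge.
  by rewrite size_rcons; lia.
under eq_bigr do rewrite stepP_dev_w big_distrl.
rewrite exchange_big /=.
apply: (@le_trans _ _ (\sum_a sg (v0 :: t) a * valP i (v0 :: t) n.+1)); last first.
  by rewrite -big_distrl /= (proj2 (sg_valid _)) mul1r.
apply: ler_sum => a _; under eq_bigr do rewrite -mulrA; rewrite -big_distrr.
apply: ler_wpM2l; first exact: (proj1 (sg_valid _)).
by apply: pure_le => //; lia.
Qed.

Lemma pure_step_le i (a : A i) t n : ~~ reached i (v0 :: t) ->
  ((size t).+1 + n.+1 = F)%N ->
  (i \in cg_P G (last v0 t) ->
     reachT pi (mod_tr pi i a (chain_state t)) i (chain_state t)
       <= reachT pi (chain_tr pi) i (chain_state t)) ->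
  \sum_v' pure_tr a (chain_state t) v' * valP i (rcons (v0 :: t) v') n
    <= valP i (v0 :: t) n.+1.
Proof.
move=> nr hsize mod_le.
have [iP|iNP] := boolP (i \in cg_P G (last v0 t)).
  rewrite -reachT_mod_chain_state // (@val_prof_reach i n.+1 t F _ hsize).
  - exact: mod_le.
  - by move: nr; rewrite reached_cons_belast negb_or => /andP[].
  - by lia.
rewrite val_unreachedS //.
by under eq_bigr => v' _ do rewrite pure_tr_notin_P // -stepP_prof_w.
Qed.

End ProductChain.

Unset Implicit Arguments.
Set Strict Implicit.

Theorem mainTheorem5 (R : realType) (b : nat) (G : cgs R) (pi : tprofile G) :
  (1 <= b)%N -> bounded_cgs G b ->
  (forall i, valid_transducer (pi i)) ->
  ~ SPE (fun i => trans_strat (pi i)) ->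
  exists (i : 'I_(cg_k G)) (v : cg_V G) (s : PS pi) (n : nat) (a : cg_A G i),
    [/\ i \in cg_P G v, (1 <= n <= cg_F G)%N,
        inR pi i (v, s, n) &
        reachT pi (chain_tr pi) i (v, s, n)
          < reachT pi (mod_tr pi i a (v, s, n)) i (v, s, n)].
Proof.
move=> _ bounded valid notSPE; apply: NNPP => no_gain; apply: notSPE.
move=> _ [t [-> [hsize hpath]]] i sg sg_valid.
apply: (one_shot_deviation bounded valid sg_valid) => //; last by move: hsize => /=; lia.
move=> t' a n hpath' nr hsize'; apply: (pure_step_le bounded valid) => // iP.
rewrite leNgt; apply/negP => gain; apply: no_gain.
exists i, (chain_state pi t').1.1, (chain_state pi t').1.2, (chain_state pi t').2, a.
by split => //=; [lia | exact: inR_chain_state].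
Qed.
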